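(* Let $c,o$ be vertices with a directed path from $c$ to $o$, and put $\delta=\delta_{co}$. Assume that the polynomials $b(s)q(s)$ and $a(s)p(s)$ have no common root. If $s_0$ is a root of $b(s)q(s)$ of multiplicity $m$, then $s_0$ is a zero of the rational function $T_{co}(s)$ of multiplicity exactly $(\delta+1)m$.
   Context: $\mathcal G$ is a weighted directed graph on $\{1,\dots,N\}$ with adjacency matrix $A=[a_{ij}]$. Here $a_{ij}>0$ if there is an arc from $j$ to $i$ and $a_{ij}=0$ otherwise (no self-loops). The Laplacian is $L=D-A$ with $D=\mathrm{diag}(\sum_j a_{ij})$. A directed path from $u$ to $w$ is a sequence of distinct vertices $u=v_0,\dots,v_\ell=w$ with an arc from $v_k$ to $v_{k+1}$ for each $k$, and $\ell$ is its length. $\delta_{uw}$ is the length of a shortest directed path from $u$ to $w$. $e_i$ is the $i$-th canonical basis vector. Let $a,b,p,q$ be nonzero real polynomials and $M(s)=\frac{b(s)q(s)}{a(s)p(s)}$. The network is $y=M(s)[-Ly+r]$. $T_{co}(s)=e_o^T(I+M(s)L)^{-1}M(s)e_c$ is the transfer function from $r_c$ to $y_o$ with all other inputs zero. *)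

From HB Require Import structures.
From mathcomp Require Import all_boot all_order all_algebra.
Set Implicit Arguments. Unset Strict Implicit. Unset Printing Implicit Defensive.
Import Order.TTheory GRing.Theory Num.Theory.
Local Open Scope ring_scope.

Section Defs.
Variable C : numClosedFieldType.
Variable N : nat.

Definition ratfun := {fraction {poly C}}.
Definition polyF (p : {poly C}) : ratfun := FracField.tofrac p.

(* Weighted digraph: A i j > 0 iff arc from j to i. *)
Definition weighted_digraph (A : 'M[C]_N) : Prop :=
  (forall i j, 0 <= A i j) /\ (forall i, A i i = 0).

Definition arc (A : 'M[C]_N) (x y : 'I_N) : bool := 0 < A y x.

Definition laplacian (A : 'M[C]_N) : 'M[C]_N :=
  \matrix_(i, j) ((i == j)%:R * (\sum_k A i k) - A i j).

Definition dpath (A : 'M[C]_N) (u w : 'I_N) (l : nat) : Prop :=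
  exists p : seq 'I_N,
    [/\ size p = l, path (arc A) u p, last u p = w & uniq (u :: p)].

Definition shortest_dist (A : 'M[C]_N) (u w : 'I_N) (delta : nat) : Prop :=
  dpath A u w delta /\ (forall l, dpath A u w l -> (delta <= l)%N).

Definition Mfun (a b p q : {poly C}) : ratfun := polyF (b * q) / polyF (a * p).

Definition Tco (A : 'M[C]_N) (a b p q : {poly C}) (c o : 'I_N) : ratfun :=
  let L : 'M[ratfun]_N := map_mx (fun x => polyF x%:P) (laplacian A) in
  let M := Mfun a b p q in
  ((delta_mx o 0 : 'cV[ratfun]_N)^T *m invmx (1%:M + M *: L)
     *m (M *: (delta_mx c 0 : 'cV[ratfun]_N))) 0 0.

Definition ratfun_zero_mult (f : ratfun) (s0 : C) (k : nat) : Prop :=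
  exists u v : {poly C},
    [/\ u.[s0] != 0, v.[s0] != 0 &
        f = polyF (('X - s0%:P) ^+ k * u) / polyF v].
End Defs.

From Pilot Require Import Defs.
From HB Require Import structures.
From mathcomp Require Import all_boot all_order all_algebra.
Set Implicit Arguments. Unset Strict Implicit. Unset Printing Implicit Defensive.
Import Order.TTheory GRing.Theory Num.Theory.
Local Open Scope ring_scope.

(* With the pencil B(s) = I + s L, Cramer's rule gives
   T_co = M adj(B)(M)_oc / det(B)(M).  The constant term of det B is 1, and
   comparing coefficients in B adj B = det B shows that the k-th coefficient
   of adj(B)_oc vanishes for k < delta and is positive for k = delta; so
   adj(B)_oc = s^delta g(s) with g(0) <> 0 and T_co = M^(delta+1) g(M) / det(B)(M).
   Writing M = n/d with n = bq, d = ap and clearing denominators, g(M) and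
   det(B)(M) become polynomials whose values at s0 are g(0) d(s0)^k and
   d(s0)^k', both nonzero since n(s0) = 0; hence s0 is a zero of T_co of
   multiplicity exactly (delta+1) times its multiplicity in n. *)

Section LaplacianPencil.
Variables (C : numClosedFieldType) (N : nat) (A : 'M[C]_N) (c : 'I_N).
Hypothesis wdA : weighted_digraph A.

Definition laplacian_pencil : 'M[{poly C}]_N :=
  \matrix_(i, j) ((i == j)%:R + 'X * (laplacian A i j)%:P).

Local Notation B := laplacian_pencil.
Local Notation y i := (\adj B i c).

Lemma laplacian_offdiag i j : i != j -> laplacian A i j = - A i j.
Proof. by move=> /negbTE hij; rewrite mxE hij mul0r sub0r. Qed.

Lemma weight_no_arc i j : ~~ Defs.arc A j i -> A i j = 0.
Proof.
by rewrite /Defs.arc => hji; apply/eqP; move: (wdA.1 i j); rewrite le0r (negbTE hji) orbF.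
Qed.

Lemma pencil_adj_col i :
  y i + 'X * \sum_j (laplacian A i j)%:P * y j = (\det B) *+ (i == c).
Proof.
have := congr1 (fun X : 'M[{poly C}]_N => X i c) (mul_mx_adj B).
rewrite [LHS]mxE [RHS]mxE => <-; symmetry.
under eq_bigr => j _ do rewrite mxE mulrDl -mulrA.
rewrite big_split /= mulr_sumr; congr (_ + _).
rewrite (bigD1 i) //= eqxx mul1r big1 ?addr0 // => j /negbTE.
by rewrite eq_sym => ->; rewrite mul0r.
Qed.

Lemma det_pencil_coef0 : (\det B)`_0 = 1.
Proof.
rewrite -horner_coef0 -horner_evalE -det_map_mx.
have -> : map_mx (horner_eval 0) B = 1%:M.
  by apply/matrixP => i j; rewrite !mxE horner_evalE !hornerE; case: (i == j); rewrite /= ?hornerE.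
by rewrite det_scalar expr1n.
Qed.

Lemma adj_pencil_coef0 i : (y i)`_0 = (i == c)%:R.
Proof.
have := congr1 (fun p : {poly C} => p`_0) (pencil_adj_col i).
rewrite /= coefD coefXM addr0 => ->.
by case: (i == c); rewrite ?det_pencil_coef0 ?coef0.
Qed.

Lemma adj_pencil_coefS i k :
  (y i)`_k.+1 = (\det B *+ (i == c))`_k.+1 - \sum_j laplacian A i j * (y j)`_k.
Proof.
have := congr1 (fun p : {poly C} => p`_k.+1) (pencil_adj_col i).
rewrite /= coefD coefXM coef_sum => <-.
by under [in RHS]eq_bigr => j _ do rewrite -coefCM; rewrite addrK.
Qed.

Fixpoint reach_within (k : nat) (i : 'I_N) : bool :=
  if k is k'.+1 then reach_within k' i || [exists j, reach_within k' j && Defs.arc A j i]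
  else i == c.

Definition reach_before (k : nat) (i : 'I_N) : bool :=
  if k is k'.+1 then reach_within k' i else false.

Lemma reach_within_src k : reach_within k c.
Proof. by elim: k => [|k IH] /=; rewrite ?eqxx ?IH. Qed.

Lemma adj_pencil_coef_eq0 k i : ~~ reach_within k i -> (y i)`_k = 0.
Proof.
elim: k i => [|k IH] i /=; first by rewrite adj_pencil_coef0 => /negbTE ->.
rewrite negb_or => /andP [hi /existsPn hn].
have /negbTE hic : i != c by apply: contraNneq hi => ->; apply: reach_within_src.
rewrite adj_pencil_coefS hic coef0 sub0r big1 ?oppr0 // => j _.
case: (eqVneq i j) => [<-|nij]; first by rewrite IH ?mulr0.
have := hn j; rewrite negb_and => /orP [hj|hj]; first by rewrite IH ?mulr0.
by rewrite laplacian_offdiag // weight_no_arc // oppr0 mul0r.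
Qed.

(* Off the source, [(y i)`_k] is a nonnegative combination of the [(y j)`_(k-1)]
   with weights [A i j]; it becomes positive exactly at the distance from [c]. *)
Lemma adj_pencil_coef_gt0 k i :
  reach_within k i -> ~~ reach_before k i -> 0 < (y i)`_k.
Proof.
elim: k i => [|k IH] i /=.
  by move=> /eqP -> _; rewrite adj_pencil_coef0 eqxx ltr01.
move=> + hni; case/orP => [hk|/existsP [j0 /andP [hj0 harc]]].
  by rewrite hk in hni.
have /negbTE hic : i != c by apply: contraNneq hni => ->; apply: reach_within_src.
rewrite adj_pencil_coefS hic coef0 sub0r -sumrN.
have hterm j : - (laplacian A i j * (y j)`_k) = A i j * (y j)`_k.
  case: (eqVneq i j) => [<-|nij].
    by rewrite adj_pencil_coef_eq0 // !mulr0 oppr0.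
  by rewrite laplacian_offdiag // mulNr opprK.
under eq_bigr => j _ do rewrite hterm.
have arc_not_before j : Defs.arc A j i -> ~~ reach_before k j.
  move=> ha; apply: contra hni; case: k {IH hj0 hterm} => //= k hk.
  by apply/orP; right; apply/existsP; exists j; rewrite hk.
rewrite (bigD1 j0) //=; apply: (@lt_le_trans _ _ (A i j0 * (y j0)`_k)).
  by apply: mulr_gt0 => //; apply: IH => //; apply: arc_not_before.
rewrite lerDl; apply: sumr_ge0 => j _.
case: (boolP (reach_within k j)) => hj; last by rewrite adj_pencil_coef_eq0 ?mulr0.
case: (boolP (Defs.arc A j i)) => ha; last by rewrite weight_no_arc ?mul0r.
by apply/mulr_ge0/ltW/IH/arc_not_before => //; apply: wdA.1.
Qed.

Lemma path_reach_within p : path (Defs.arc A) c p -> reach_within (size p) (last c p).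
Proof.
elim/last_ind: p => [|p x IH] /=; first by rewrite eqxx.
rewrite rcons_path size_rcons last_rcons => /andP [hp ha] /=.
by apply/orP; right; apply/existsP; exists (last c p); rewrite IH.
Qed.

Lemma reach_within_path k i : reach_within k i ->
  exists p, [/\ (size p <= k)%N, path (Defs.arc A) c p & last c p = i].
Proof.
elim: k i => [|k IH] i /=; first by move/eqP ->; exists [::].
case/orP => [/IH [p [hs hp hl]]|/existsP [j /andP [/IH [p [hs hp hl]] ha]]].
  by exists p; split => //; apply: leqW.
by exists (rcons p i); rewrite size_rcons rcons_path last_rcons hl hp ha.
Qed.

Lemma reach_within_dpath k i : reach_within k i -> exists2 l, (l <= k)%N & dpath A c i l.
Proof.
move/reach_within_path => [p [hs hp <-]]; case: (shortenP hp) => p' hp' hu hsub.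
exists (size p'); last by exists p'.
apply: leq_trans hs; apply: uniq_leq_size => //.
by move: hu; rewrite cons_uniq => /andP [].
Qed.

Lemma adj_pencil_factor o delta : shortest_dist A c o delta ->
  exists2 g : {poly C}, g`_0 != 0 & \adj B o c = g * 'X^delta.
Proof.
case=> [[s [hs hp hl _]] hmin].
have far k : reach_within k o -> (delta <= k)%N.
  by move=> /reach_within_dpath [l hlk hd]; apply: leq_trans (hmin l hd) hlk.
exists (drop_poly delta (y o)).
  rewrite coef_drop_poly add0n lt0r_neq0 // adj_pencil_coef_gt0 //.
    by rewrite -hl -hs path_reach_within.
  by case: delta far {hs hmin} => //= k far; apply/negP => /far; rewrite ltnn.
rewrite -{1}(poly_take_drop delta (y o)) -[RHS]add0r; congr (_ + _).
apply/polyP => k; rewrite coef_take_poly coef0; case: ifP => // hk.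
by rewrite adj_pencil_coef_eq0 //; apply/negP => /far; rewrite leqNgt hk.
Qed.

End LaplacianPencil.
Section EvalAtRatio.
Variables (K : fieldType) (n d : {poly K}).
Hypothesis d_neq0 : d != 0.
Local Notation F := {fraction {poly K}}.
Local Notation "x %:F" := (@FracField.tofrac _ x) (format "x %:F").

Definition const_frac : K -> F := (@FracField.tofrac _) \o polyC.
HB.instance Definition _ := GRing.RMorphism.on const_frac.

Definition ratio : F := n%:F / d%:F.

Lemma ratio_comm : commr_rmorph const_frac ratio.
Proof. by move=> x; apply: mulrC. Qed.

Definition eval_ratio : {poly K} -> F := horner_morph ratio_comm.
HB.instance Definition _ := GRing.RMorphism.on eval_ratio.

Lemma eval_ratioX : eval_ratio 'X = ratio.
Proof. exact: horner_morphX. Qed.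

Lemma eval_ratioC x : eval_ratio x%:P = (x%:P)%:F.
Proof. exact: horner_morphC. Qed.

Definition homogenize (G : {poly K}) : {poly K} :=
  \sum_(i < size G) (G`_i)%:P * n ^+ i * d ^+ (size G - i).

Lemma tofrac_d_neq0 : d%:F != 0. Proof. by rewrite tofrac_eq0. Qed.

Lemma eval_ratioE G : eval_ratio G = (homogenize G)%:F / d%:F ^+ size G.
Proof.
have dX_neq0 i : d%:F ^+ i != 0 by rewrite expf_neq0 // tofrac_d_neq0.
apply: (mulIf (dX_neq0 (size G))); rewrite divfK //.
rewrite /eval_ratio /horner_morph horner_coef size_map_poly mulr_suml rmorph_sum.
apply: eq_bigr => i _; rewrite coef_map /= !rmorphM !rmorphXn /=.
rewrite (_ : d%:F ^+ size G = d%:F ^+ i * d%:F ^+ (size G - i)).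
  by rewrite /ratio expr_div_n mulrA -(mulrA _ (_ / _)) divfK.
by rewrite -exprD subnKC // ltnW.
Qed.

Variable s0 : K.
Hypothesis n_s0 : n.[s0] = 0.
Hypothesis d_s0 : d.[s0] != 0.

Lemma homogenize_root (G : {poly K}) : G != 0 ->
  (homogenize G).[s0] = G`_0 * d.[s0] ^+ size G.
Proof.
rewrite -size_poly_gt0 /homogenize horner_sum; case: (size G) => // k _.
rewrite big_ord_recl /= !hornerE subn0 big1 ?addr0 // => i _.
by rewrite !hornerE n_s0 expr0n /= mulr0 mul0r.
Qed.

Lemma homogenize_root_neq0 (G : {poly K}) : G`_0 != 0 -> (homogenize G).[s0] != 0.
Proof.
move=> G0; have G_neq0 : G != 0 by apply: contra_neq G0 => ->; rewrite coef0.
by rewrite homogenize_root // mulf_neq0 // expf_neq0.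
Qed.

Lemma eval_ratio_neq0 (G : {poly K}) : G`_0 != 0 -> eval_ratio G != 0.
Proof.
move=> /homogenize_root_neq0 hG; rewrite eval_ratioE mulf_neq0 //.
  by rewrite tofrac_eq0; apply: contra_neq hG => ->; rewrite horner0.
by rewrite invr_eq0 expf_neq0 // tofrac_d_neq0.
Qed.

End EvalAtRatio.

Lemma ratio_power_zero_mult (C : numClosedFieldType) (n d u G H : {poly C}) (s0 : C) (k m : nat) :
  n = ('X - s0%:P) ^+ m * u -> (0 < m)%N -> u.[s0] != 0 -> d.[s0] != 0 ->
  G`_0 != 0 -> H`_0 != 0 ->
  ratfun_zero_mult (ratio n d ^+ k * eval_ratio n d G / eval_ratio n d H) s0 (k * m).
Proof.
move=> hn m_gt0 u_s0 d_s0 G0 H0.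
have d_neq0 : d != 0 by apply: contra_neq d_s0 => ->; rewrite horner0.
have n_s0 : n.[s0] = 0 by rewrite hn hornerM horner_exp hornerXsubC subrr expr0n gtn_eqF // mul0r.
have HG_s0 := homogenize_root_neq0 n_s0 d_s0 G0.
have HH_s0 := homogenize_root_neq0 n_s0 d_s0 H0.
exists (u ^+ k * homogenize n d G * d ^+ size H).
exists (d ^+ k * d ^+ size G * homogenize n d H).
split; rewrite ?hornerM ?horner_exp; do ?apply: mulf_neq0; rewrite ?expf_neq0 //.
have poly_eq : ('X - s0%:P) ^+ (k * m) * (u ^+ k * homogenize n d G * d ^+ size H)
    = n ^+ k * homogenize n d G * d ^+ size H.
  by rewrite hn exprMn -exprM mulnC !mulrA.
rewrite poly_eq !eval_ratioE // /ratio expr_div_n /polyF !tofracM !tofracXn.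
by rewrite invf_div !mulf_div.
Qed.

Lemma mup_factor (K : fieldType) (f : {poly K}) (x : K) : f != 0 ->
  exists2 u, u.[x] != 0 & f = ('X - x%:P) ^+ mup x f * u.
Proof.
move=> f_neq0; have [k [u]] := multiplicity_XsubC f x; rewrite f_neq0 /= => ux ->.
by exists u; rewrite // mupMr // mup_XsubCX eqxx mulrC.
Qed.

Lemma delta_form_entry (R : comNzRingType) (N : nat) (X : 'M[R]_N) (x : R) (o c : 'I_N) :
  ((delta_mx o 0 : 'cV[R]_N)^T *m X *m (x *: (delta_mx c 0 : 'cV[R]_N))) 0 0 = x * X o c.
Proof. by rewrite trmx_delta -rowE -scalemxAr -colE !mxE. Qed.

(* [I + M L] is the image of the pencil [I + s L] under [s |-> M]. *)
Lemma Tco_adj_det (C : numClosedFieldType) (N : nat) (A : 'M[C]_N)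
    (a b p q : {poly C}) (c o : 'I_N) :
  eval_ratio (b * q) (a * p) (\det (laplacian_pencil A)) != 0 ->
  Tco A a b p q c o =
    ratio (b * q) (a * p) * eval_ratio (b * q) (a * p) (\adj (laplacian_pencil A) o c)
    / eval_ratio (b * q) (a * p) (\det (laplacian_pencil A)).
Proof.
move=> ev_det.
have pencil_at_ratio : map_mx (eval_ratio (b * q) (a * p)) (laplacian_pencil A) =
    1%:M + Mfun a b p q *: map_mx (fun x => polyF x%:P) (laplacian A).
  rewrite /laplacian_pencil; move: (laplacian A) => L.
  apply/matrixP => i j; rewrite !mxE rmorphD rmorphM rmorph_nat /=.
  by rewrite eval_ratioX eval_ratioC.
rewrite /Tco -pencil_at_ratio delta_form_entry /invmx unitmxE det_map_mx unitfE ev_det.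
by rewrite -map_mx_adj !mxE mulrCA mulrC.
Qed.

Theorem corollary1 (C : numClosedFieldType) (N : nat) (A : 'M[C]_N)
  (a b p q : {poly C}) (c o : 'I_N) (delta m : nat) (s0 : C) :
  weighted_digraph A ->
  a \is a polyOver Num.real -> b \is a polyOver Num.real ->
  p \is a polyOver Num.real -> q \is a polyOver Num.real ->
  a != 0 -> b != 0 -> p != 0 -> q != 0 ->
  shortest_dist A c o delta ->
  (forall z : C, ~~ (root (b * q) z && root (a * p) z)) ->
  root (b * q) s0 -> mup s0 (b * q) = m ->
  ratfun_zero_mult (Tco A a b p q c o) s0 ((delta + 1) * m)%N.
Proof.
move=> wdA _ _ _ _ a0 b0 p0 q0 dist_co coprime s0_root <-.
have n_neq0 : b * q != 0 by rewrite mulf_neq0.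
have d_neq0 : a * p != 0 by rewrite mulf_neq0.
have d_s0 : (a * p).[s0] != 0 by move: (coprime s0); rewrite s0_root.
have n_s0 : (b * q).[s0] = 0 by apply/eqP.
have mup_gt0 : (0 < mup s0 (b * q))%N by rewrite -XsubC_dvd // dvdp_XsubCl.
have [u u_s0 n_factor] := mup_factor s0 n_neq0.
have [g g0 adj_factor] := adj_pencil_factor wdA dist_co.
have det0 := det_pencil_coef0 A.
rewrite Tco_adj_det; last by rewrite (eval_ratio_neq0 d_neq0 n_s0) ?det0 ?oner_neq0.
rewrite adj_factor rmorphM rmorphXn /= eval_ratioX mulrCA -exprS [_ * ratio _ _ ^+ _]mulrC.
by rewrite addn1; apply: (ratio_power_zero_mult _ n_factor); rewrite ?det0 ?oner_neq0.
Qed.
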